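(* In the setup below, for every $\omega\in\Omega$ with $p(\omega|x)>0$, $$I_\omega(|\Psi_x^{SE}\rangle):=4\,\langle\partial_x^\perp\Psi_x^{SE}|(\mathbb I\otimes|\pi_\omega^E\rangle\langle\pi_\omega^E|)|\partial_x^\perp\Psi_x^{SE}\rangle\ \ge\ p(\omega|x)\,I(\sigma_{x|\omega})+\frac{(\partial_xp(\omega|x))^2}{p(\omega|x)} .$$ Consequently, for any subset $\checkmark\subseteq\Omega$ of outcomes with $p(\omega|x)>0$ for $\omega\in\checkmark$, $I(|\Psi_x^{SE}\rangle)\ge\sum_{\omega\in\checkmark}p(\omega|x)I(\sigma_{x|\omega})$.
   Context: Setup: finite-dimensional $\mathcal H_S,\mathcal H_E$; unit vectors $|\psi_i\rangle\in\mathcal H_S$, $|\phi_i^E\rangle\in\mathcal H_E$; a $C^1$ family of unitaries $U_x^{SE}$ on $\mathcal H_S\otimes\mathcal H_E$; an orthonormal basis $\{|\pi_\omega^E\rangle\}_{\omega\in\Omega}$ of $\mathcal H_E$. $|\Psi_x^{SE}\rangle=U_x^{SE}(|\psi_i\rangle\otimes|\phi_i^E\rangle)$ and $|\partial_x^\perp\Psi_x^{SE}\rangle=|\partial_x\Psi_x^{SE}\rangle-|\Psi_x^{SE}\rangle\langle\Psi_x^{SE}|\partial_x\Psi_x^{SE}\rangle$. $M_{\omega,x}=\langle\pi_\omega^E|U_x^{SE}|\phi_i^E\rangle$, $|\tilde\psi_{x|\omega}\rangle=M_{\omega,x}|\psi_i\rangle$, $p(\omega|x)=\|\tilde\psi_{x|\omega}\|^2$,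 $\sigma_{x|\omega}=|\tilde\psi_{x|\omega}\rangle\langle\tilde\psi_{x|\omega}|/p(\omega|x)$. QFI of a normalized pure state: $I(|\phi_x\rangle)=4(\langle\partial_x\phi_x|\partial_x\phi_x\rangle-|\langle\phi_x|\partial_x\phi_x\rangle|^2)$. *)

From HB Require Import structures.
From mathcomp Require Import all_boot all_order all_algebra.
From mathcomp Require Import all_classical all_reals all_analysis.
From mathcomp Require Import complex.

Set Implicit Arguments.
Unset Strict Implicit.
Unset Printing Implicit Defensive.

Import Order.TTheory GRing.Theory Num.Theory.
Import numFieldNormedType.Exports.
Local Open Scope ring_scope.

(* Finite-dimensional Hilbert spaces are modelled as C^T = (T -> R[i]) for a
   finite index type T (a fixed orthonormal "computational" basis).
   The composite space H_S (x) H_E is C^(S * E). *)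

Definition abs2 (R : realType) (z : R[i]) : R := (complex.Re z) ^+ 2 + (complex.Im z) ^+ 2.

Definition dotv (R : realType) (T : finType) (u v : T -> R[i]) : R[i] :=
  \sum_(t : T) conjc (u t) * v t.

Definition normsq (R : realType) (T : finType) (v : T -> R[i]) : R :=
  \sum_(t : T) abs2 (v t).

Definition dC (R : realType) (f : R -> R[i]) (x : R) : R[i] :=
  Complex (derive1 (fun t => complex.Re (f t)) x) (derive1 (fun t => complex.Im (f t)) x).

Definition C1fun (R : realType) (f : R -> R[i]) : Prop :=
  (forall t, derivable (fun y => complex.Re (f y)) t 1) /\
  continuous (fun t : R => (derive1 (fun y => complex.Re (f y)) t : R)) /\
  (forall t, derivable (fun y => complex.Im (f y)) t 1) /\
  continuous (fun t : R => (derive1 (fun y => complex.Im (f y)) t : R)).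

Definition dvec (R : realType) (T : finType) (phi : R -> T -> R[i]) (x : R)
  : T -> R[i] := fun t => dC (fun y => phi y t) x.

(* QFI of a (normalized) pure state family:
   I(|phi_x>) = 4 (<d phi|d phi> - |<phi|d phi>|^2) *)
Definition QFI (R : realType) (T : finType) (phi : R -> T -> R[i]) (x : R) : R :=
  4 * (complex.Re (dotv (dvec phi x) (dvec phi x)) - abs2 (dotv (phi x) (dvec phi x))).

Definition unitary_family (R : realType) (T : finType) (U : R -> T -> T -> R[i])
  : Prop :=
  forall x i j, \sum_(k : T) U x i k * conjc (U x j k) = (i == j)%:R.

Definition C1_family (R : realType) (T : finType) (U : R -> T -> T -> R[i])
  : Prop := forall i j, C1fun (fun x => U x i j).

Definition orthonormal_basis (R : realType) (E Om : finType) (pi : Om -> E -> R[i])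
  : Prop :=
  (forall w w', dotv (pi w) (pi w') = (w == w')%:R) /\ #|Om| = #|E|.

Section Setup.
Variables (R : realType) (S E Om : finType).
Variables (psi : S -> R[i]) (phi : E -> R[i]) (U : R -> (S * E)%type -> (S * E)%type -> R[i]).
Variable (pi : Om -> E -> R[i]).

Definition Psi (x : R) : (S * E)%type -> R[i] :=
  fun k => \sum_(l : (S * E)%type) U x k l * (psi l.1 * phi l.2).

Definition dperpPsi (x : R) : (S * E)%type -> R[i] :=
  fun k => dvec Psi x k - Psi x k * dotv (Psi x) (dvec Psi x).

(* (I (x) |pi_w><pi_w|) applied to v *)
Definition projE (w : Om) (v : (S * E)%type -> R[i]) : (S * E)%type -> R[i] :=
  fun k => pi w k.2 * \sum_(e : E) conjc (pi w e) * v (k.1, e).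

Definition Iomega (w : Om) (x : R) : R :=
  4 * complex.Re (dotv (dperpPsi x) (projE w (dperpPsi x))).

Definition Mop (w : Om) (x : R) (s s' : S) : R[i] :=
  \sum_(e : E) \sum_(e' : E) conjc (pi w e) * U x (s, e) (s', e') * phi e'.

Definition psit (w : Om) (x : R) : S -> R[i] :=
  fun s => \sum_(s' : S) Mop w x s s' * psi s'.

Definition prob (w : Om) (x : R) : R := normsq (psit w x).

(* normalized state vector of the pure state sigma_{x|w} =
   |psi~><psi~| / p(w|x) *)
Definition sigvec (w : Om) (x : R) : S -> R[i] :=
  fun s => psit w x s / Complex (Num.sqrt (prob w x)) 0.

End Setup.

From HB Require Import structures.
From mathcomp Require Import all_boot all_order all_algebra.
From mathcomp Require Import all_classical all_reals all_analysis.
From mathcomp Require Import complex.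
From mathcomp Require Import ring.
Import Order.TTheory GRing.Theory Num.Theory.
Local Open Scope ring_scope.
Local Open Scope complex_scope.
Set Implicit Arguments.
Unset Strict Implicit.

(* Write q_w(x) := <pi_w|Psi_x>, so that p(w|x) = ||q_w||^2 and sigma_{x|w} is
   the normalisation of q_w.  For a normalised family q/sqrt p the QFI only sees
   the part of dq orthogonal to q, which gives
     p I(sigma) + p'^2/p = 4 (||dq||^2 - Im<q|dq>^2 / p).
   Since ||Psi_x|| = 1, the number c = <Psi|dPsi> is purely imaginary, and
   <pi_w|d^perp Psi> = dq - c q; minimising ||dq - c q||^2 over imaginary c
   yields exactly the right-hand side above, hence the first inequality.
   Summing the I_w over the orthonormal basis {pi_w} gives 4 ||d^perp Psi||^2,
   the QFI of Psi, which dominates the partial sum over any set of outcomes. *)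

Local Notation Re := complex.Re.
Local Notation Im := complex.Im.

Lemma sum_pair (V : nmodType) (T1 T2 : finType) (F : T1 * T2 -> V) :
  \sum_k F k = \sum_a \sum_b F (a, b).
Proof. by rewrite pair_bigA; apply: eq_bigr => -[]. Qed.

Lemma sum_mul_delta (V : pzSemiRingType) (T : finType) (F : T -> V) i :
  \sum_j F j * (i == j)%:R = F i.
Proof.
rewrite (bigD1 i) //= eqxx mulr1 big1 ?addr0 // => j ji.
by rewrite eq_sym (negbTE ji) mulr0.
Qed.

Lemma sum_enum_cast (V : nmodType) (T : finType) n (Tn : n = #|T|) (F : T -> V) :
  \sum_k F k = \sum_(m < n) F (enum_val (cast_ord Tn m)).
Proof.
rewrite (reindex (fun m : 'I_n => enum_val (cast_ord Tn m))) //=.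
exists (fun k => cast_ord (esym Tn) (enum_rank k)) => m _.
  by rewrite enum_valK cast_ordK.
by rewrite cast_ordKV enum_rankK.
Qed.

Section ComplexFacts.
Variable R : realType.
Local Notation C := R[i].
Implicit Types z w : C.

Lemma ReM z w : Re (z * w) = Re z * Re w - Im z * Im w.
Proof. by case: z w => a b [c d]. Qed.

Lemma ImM z w : Im (z * w) = Re z * Im w + Im z * Re w.
Proof. by case: z w => a b [c d]. Qed.

Lemma ReJ z : Re (conjc z) = Re z. Proof. by case: z. Qed.

Lemma ImJ z : Im (conjc z) = - Im z. Proof. by case: z. Qed.

Lemma conjK z : conjc (conjc z) = z.
Proof. by case: z => a b; rewrite /= opprK. Qed.

Lemma abs2E z : (abs2 z)%:C = conjc z * z.
Proof.
by case: z => a b; apply/eqP; rewrite eq_complex /abs2 /=; apply/andP; split;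
  apply/eqP; ring.
Qed.

Lemma abs2_ge0 z : 0 <= abs2 z.
Proof. by rewrite addr_ge0 // sqr_ge0. Qed.

Lemma abs2M z w : abs2 (z * w) = abs2 z * abs2 w.
Proof. by rewrite /abs2 ReM ImM; ring. Qed.

(* Orthonormal rows say A A^* = 1; for a square A this forces A^* A = 1. *)
Lemma orthonormal_cols (T1 T2 : finType) (f : T1 -> T2 -> C) :
  #|T1| = #|T2| ->
  (forall i j, \sum_k f i k * conjc (f j k) = (i == j)%:R) ->
  forall k l, \sum_i conjc (f i k) * f i l = (k == l)%:R.
Proof.
move=> T12 rows k l; pose n := #|T1|.
pose g1 (i : 'I_n) : T1 := enum_val (cast_ord (erefl n) i).
pose g2 (j : 'I_n) : T2 := enum_val (cast_ord T12 j).
pose A : 'M[C]_n := \matrix_(i, j) f (g1 i) (g2 j).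
pose B : 'M[C]_n := \matrix_(i, j) conjc (f (g1 j) (g2 i)).
have AB : A *m B = 1%:M.
  apply/matrixP => i j; rewrite !mxE.
  have -> : (i == j) = (g1 i == g1 j) by rewrite /g1 (inj_eq enum_val_inj).
  rewrite -rows (sum_enum_cast T12).
  by apply: eq_bigr => m _; rewrite !mxE.
have := congr1 (fun M : 'M[C]_n => M (cast_ord (esym T12) (enum_rank k))
  (cast_ord (esym T12) (enum_rank l))) (mulmx1C AB).
rewrite !mxE (inj_eq (@cast_ord_inj _ _ _)) (inj_eq enum_rank_inj) => <-.
rewrite (sum_enum_cast (erefl n)); apply: eq_bigr => m _.
by rewrite !mxE /g2 !cast_ordKV !enum_rankK.
Qed.

End ComplexFacts.

Section InnerProduct.
Variables (R : realType) (T : finType).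
Local Notation C := R[i].
Implicit Types u v : T -> C.

Lemma dotvC u v : conjc (dotv u v) = dotv v u.
Proof.
rewrite /dotv rmorph_sum; apply: eq_bigr => t _.
by rewrite rmorphM /= conjK mulrC.
Qed.

Lemma dotvv v : dotv v v = (normsq v)%:C.
Proof. by rewrite /normsq raddf_sum; apply: eq_bigr => t _; exact/esym/abs2E. Qed.

Lemma normsq_ge0 v : 0 <= normsq v.
Proof. by apply: sumr_ge0 => t _; exact: abs2_ge0. Qed.

Lemma dotv_lincomb (a b c d : C) u v u' v' :
  dotv (fun t => a * u t + b * v t) (fun t => c * u' t + d * v' t) =
  conjc a * c * dotv u u' + conjc a * d * dotv u v' +
  conjc b * c * dotv v u' + conjc b * d * dotv v v'.
Proof.
rewrite /dotv !mulr_sumr -!big_split /=; apply: eq_bigr => t _.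
rewrite rmorphD !rmorphM /=; ring.
Qed.

Lemma normsq_sub_imag_ge u v (c : C) : Re c = 0 -> 0 < normsq v ->
  normsq u - Im (dotv v u) ^+ 2 / normsq v <= normsq (fun t => u t - c * v t).
Proof.
move=> Rec v_gt0.
have -> : normsq (fun t => u t - c * v t) =
    normsq u - 2 * Im c * Im (dotv v u) + Im c ^+ 2 * normsq v.
  apply: (@complexI R); rewrite -dotvv.
  rewrite (_ : (fun t => _) = fun t => 1 * u t + (- c) * v t); last first.
    by apply/funext => t; rewrite mul1r mulNr.
  rewrite dotv_lincomb -[dotv u v]dotvC !dotvv.
  case: c Rec => _ ci /= ->; case: (dotv v u) => gr gi.
  by apply/eqP; rewrite eq_complex /=; apply/andP; split; apply/eqP; ring.
rewrite -subr_ge0.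
have -> : normsq u - 2 * Im c * Im (dotv v u) + Im c ^+ 2 * normsq v -
    (normsq u - Im (dotv v u) ^+ 2 / normsq v) =
    (Im c * normsq v - Im (dotv v u)) ^+ 2 / normsq v.
  by field; rewrite gt_eqF.
by rewrite divr_ge0 ?sqr_ge0 // ltW.
Qed.

End InnerProduct.

Lemma normsq_isometry (R : realType) (T T' : finType) (M : T' -> T -> R[i])
    (v : T -> R[i]) :
  (forall k l, \sum_i conjc (M i k) * M i l = (k == l)%:R) ->
  normsq (fun i => \sum_j M i j * v j) = normsq v.
Proof.
move=> Mcols; apply: (@complexI R); rewrite -!dotvv /dotv.
transitivity (\sum_l \sum_l' conjc (v l) * v l' * \sum_k conjc (M k l) * M k l').
  transitivity (\sum_k \sum_l \sum_l' conjc (M k l * v l) * (M k l' * v l')).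
    apply: eq_bigr => k _; rewrite rmorph_sum big_distrl; apply: eq_bigr => l _.
    by rewrite big_distrr.
  rewrite exchange_big; apply: eq_bigr => l _; rewrite exchange_big.
  apply: eq_bigr => l' _; rewrite big_distrr; apply: eq_bigr => k _.
  by rewrite rmorphM /=; ring.
under eq_bigr do under eq_bigr do rewrite Mcols.
by under eq_bigr do rewrite sum_mul_delta.
Qed.

Lemma normsq_tensor (R : realType) (T1 T2 : finType)
    (a : T1 -> R[i]) (b : T2 -> R[i]) :
  normsq (fun l : T1 * T2 => a l.1 * b l.2) = normsq a * normsq b.
Proof.
rewrite /normsq sum_pair big_distrl; apply: eq_bigr => i _.
by rewrite big_distrr; apply: eq_bigr => j _; exact: abs2M.
Qed.

Section ComplexDerivative.
Variable R : realType.
Local Notation C := R[i].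
Implicit Types (f : R -> C) (x : R) (d : C).

Definition is_deriveC x f d :=
  is_derive x (1 : R) (fun y => Re (f y)) (Re d) /\
  is_derive x (1 : R) (fun y => Im (f y)) (Im d).

Lemma is_deriveC_dC x f d : is_deriveC x f d -> dC f x = d.
Proof.
case=> dRe dIm; rewrite /dC !derive1E.
rewrite (@derive_val _ _ _ _ _ _ _ dRe) (@derive_val _ _ _ _ _ _ _ dIm).
by case: d {dRe dIm}.
Qed.

Lemma C1fun_is_deriveC x f : C1fun f -> is_deriveC x f (dC f x).
Proof.
by case=> dRe [_ [dIm _]]; split; rewrite /= derive1E; exact: derivableP.
Qed.

Lemma is_derive_fsum (I : finType) (F : I -> R -> R) (dF : I -> R) x :
  (forall i, is_derive x 1 (F i) (dF i)) ->
  is_derive x 1 (fun y => \sum_i F i y) (\sum_i dF i).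
Proof.
move=> dF_; rewrite -fct_sumE.
elim/big_rec2: _ => [|i f' d _ IH]; first exact: is_derive_cst.
exact: is_deriveD.
Qed.

Lemma is_deriveC_sum (I : finType) (F : I -> R -> C) (dF : I -> C) x :
  (forall i, is_deriveC x (F i) (dF i)) ->
  is_deriveC x (fun y => \sum_i F i y) (\sum_i dF i).
Proof.
move=> dF_; split; rewrite raddf_sum.
- under [X in is_derive _ _ X]funext do rewrite raddf_sum.
  by apply: is_derive_fsum => i; case: (dF_ i).
- under [X in is_derive _ _ X]funext do rewrite raddf_sum.
  by apply: is_derive_fsum => i; case: (dF_ i).
Qed.

Lemma is_deriveC_mulr x f d c :
  is_deriveC x f d -> is_deriveC x (fun y => f y * c) (d * c).
Proof.
case=> dRe dIm; split.
- have -> : (fun y => Re (f y * c)) =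
      (fun y => Re c *: Re (f y) + (- Im c) *: Im (f y)).
    by apply/funext => y; rewrite ReM /GRing.scale /=; ring.
  rewrite ReM; apply: is_derive_eq; rewrite /GRing.scale /=; ring.
- have -> : (fun y => Im (f y * c)) =
      (fun y => Im c *: Re (f y) + Re c *: Im (f y)).
    by apply/funext => y; rewrite ImM /GRing.scale /=; ring.
  rewrite ImM; apply: is_derive_eq; rewrite /GRing.scale /=; ring.
Qed.

Lemma is_deriveC_mull x f d c :
  is_deriveC x f d -> is_deriveC x (fun y => c * f y) (c * d).
Proof.
move=> /(is_deriveC_mulr c); rewrite mulrC.
by under [X in is_deriveC _ X]funext do rewrite mulrC.
Qed.

Lemma is_deriveC_mulR x f d (g : R -> R) dg :
  is_deriveC x f d -> is_derive x 1 g dg ->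
  is_deriveC x (fun y => f y * (g y)%:C) (d * (g x)%:C + f x * dg%:C).
Proof.
case=> dRe dIm dg_; split.
- have -> : (fun y => Re (f y * (g y)%:C)) = (fun y => Re (f y) * g y).
    by apply/funext => y; rewrite ReM /= mulr0 subr0.
  rewrite raddfD /= !ReM /=; apply: is_derive_eq.
  by rewrite /GRing.scale /=; ring.
- have -> : (fun y => Im (f y * (g y)%:C)) = (fun y => Im (f y) * g y).
    by apply/funext => y; rewrite ImM /= mulr0 add0r.
  rewrite raddfD /= !ImM /=; apply: is_derive_eq.
  by rewrite /GRing.scale /=; ring.
Qed.

Lemma is_derive_normsq (T : finType) (v : R -> T -> C) (dv : T -> C) x :
  (forall t, is_deriveC x (v^~ t) (dv t)) ->
  is_derive x 1 (fun y => normsq (v y)) (2 * Re (dotv (v x) dv)).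
Proof.
move=> dv_; rewrite /normsq /dotv raddf_sum mulr_sumr.
apply: is_derive_fsum => t; case: (dv_ t) => dRe dIm.
have -> : (fun y => abs2 (v y t)) =
    (fun y => Re (v y t) * Re (v y t) + Im (v y t) * Im (v y t)).
  by apply/funext => y; rewrite /abs2 !expr2.
apply: is_derive_eq (is_deriveD (is_deriveM dRe dRe) (is_deriveM dIm dIm)) _.
by rewrite /GRing.scale /= ReM ReJ ImJ; ring.
Qed.

End ComplexDerivative.

Section NormalizedFamily.
Variables (R : realType) (T : finType).
Local Notation C := R[i].

Definition normalize (q : R -> T -> C) : R -> T -> C :=
  fun y t => q y t / (Num.sqrt (normsq (q y)))%:C.

(* The component dg q of the derivative is parallel to the state and drops out. *)
Lemma QFI_rescale (q : R -> T -> C) (dq : T -> C) (g : R -> R) (dg x : R) :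
  (forall t, is_deriveC x (q^~ t) (dq t)) -> is_derive x 1 g dg ->
  g x ^+ 2 * normsq (q x) = 1 ->
  QFI (fun y t => q y t * (g y)%:C) x =
  4 * (g x ^+ 2 * normsq dq - g x ^+ 4 * abs2 (dotv (q x) dq)).
Proof.
move=> dq_ dg_ unit_norm.
set phi := fun y t => q y t * (g y)%:C.
have dphi : dvec phi x = (fun t => (g x)%:C * dq t + dg%:C * q x t).
  apply/funext => t; rewrite /dvec /phi.
  rewrite (is_deriveC_dC (is_deriveC_mulR (dq_ t) dg_)).
  by congr (_ + _); exact: mulrC.
have phi_x : phi x = (fun t => (g x)%:C * q x t + 0 * dq t).
  by apply/funext => t; rewrite /phi mul0r addr0 mulrC.
rewrite /QFI dphi phi_x !dotv_lincomb -[dotv dq (q x)]dotvC !dotvv.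
case: (dotv (q x) dq) => gr gi; rewrite /abs2 /=.
apply/eqP; rewrite -subr_eq0; apply/eqP.
transitivity (4 * (1 - g x ^+ 2 * normsq (q x)) *
  (2 * g x * dg * gr + dg ^+ 2 * normsq (q x))); first by ring.
by rewrite unit_norm subrr mulr0 mul0r.
Qed.

Lemma QFI_normalize (q : R -> T -> C) (dq : T -> C) (x : R) :
  (forall t, is_deriveC x (q^~ t) (dq t)) -> 0 < normsq (q x) ->
  normsq (q x) * QFI (normalize q) x
    + (derive1 (fun y => normsq (q y)) x) ^+ 2 / normsq (q x)
  = 4 * (normsq dq - Im (dotv (q x) dq) ^+ 2 / normsq (q x)).
Proof.
move=> dq_ p_gt0.
have dp := is_derive_normsq dq_.
pose g y := (Num.sqrt (normsq (q y)))^-1.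
have [dg dg_] : exists dg, is_derive x 1 g dg.
  have sqrt_neq0 : (Num.sqrt \o (fun y => normsq (q y))) x != 0.
    by rewrite /= sqrtr_eq0 -ltNge.
  by eexists; exact: (is_deriveV sqrt_neq0
    (is_derive1_comp (is_derive1_sqrt p_gt0) dp)).
have gx2 : g x ^+ 2 = (normsq (q x))^-1 by rewrite /g exprVn sqr_sqrtr // ltW.
have -> : normalize q = fun y t => q y t * (g y)%:C.
  by apply/funext => y; apply/funext => t; rewrite /normalize /g fmorphV.
rewrite (QFI_rescale dq_ dg_); last by rewrite gx2 mulVf // gt_eqF.
rewrite derive1E (@derive_val _ _ _ _ _ _ _ dp).
rewrite (_ : g x ^+ 4 = (g x ^+ 2) ^+ 2); last by rewrite -exprM.
rewrite gx2 /abs2; field.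
by rewrite gt_eqF.
Qed.

End NormalizedFamily.

Section Measurement.
Variables (R : realType) (S E Om : finType).
Variables (psi : S -> R[i]) (phi : E -> R[i]).
Variables (U : R -> (S * E)%type -> (S * E)%type -> R[i]) (pi : Om -> E -> R[i]).
Hypotheses (psi1 : normsq psi = 1) (phi1 : normsq phi = 1).
Hypotheses (U_C1 : C1_family U) (U_unitary : unitary_family U).
Hypothesis pi_onb : orthonormal_basis pi.
Local Notation C := R[i].
Local Notation state := (Psi psi phi U).
Local Notation qw := (psit psi phi U pi).
Local Notation pr := (prob psi phi U pi).

(* [braE w v] is (I (x) <pi_w|) v. *)
Definition braE (w : Om) (v : S * E -> C) : S -> C :=
  fun s => \sum_e conjc (pi w e) * v (s, e).

Lemma psitE w y : qw w y = braE w (state y).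
Proof.
apply/funext => s; rewrite /psit /Mop /braE /Psi.
transitivity (\sum_s' \sum_e \sum_e'
    conjc (pi w e) * U y (s, e) (s', e') * phi e' * psi s').
  apply: eq_bigr => s' _; rewrite big_distrl; apply: eq_bigr => e _.
  by rewrite big_distrl.
rewrite exchange_big; apply: eq_bigr => e _.
rewrite sum_pair big_distrr; apply: eq_bigr => s' _; rewrite big_distrr.
by apply: eq_bigr => e' _ /=; ring.
Qed.

Lemma normsq_state y : normsq (state y) = 1.
Proof.
have U_cols := orthonormal_cols (erefl _) (U_unitary y).
rewrite /Psi (normsq_isometry (fun l => psi l.1 * phi l.2) U_cols).
by rewrite normsq_tensor psi1 phi1 mulr1.
Qed.

Lemma sum_normsq_braE v : \sum_w normsq (braE w v) = normsq v.
Proof.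
have [pi_orth pi_card] := pi_onb.
have pi_cols : forall e e',
    \sum_w conjc (conjc (pi w e)) * conjc (pi w e') = (e == e')%:R.
  apply: (orthonormal_cols (f := fun w e => conjc (pi w e)) pi_card) => w w'.
  by rewrite -(pi_orth w w'); apply: eq_bigr => e _ /=; rewrite conjK.
rewrite /normsq exchange_big [RHS]sum_pair; apply: eq_bigr => s _.
exact: (normsq_isometry (fun e => v (s, e)) pi_cols).
Qed.

Lemma dotv_projE w v : dotv v (projE pi w v) = (normsq (braE w v))%:C.
Proof.
rewrite -dotvv /dotv /projE /braE sum_pair; apply: eq_bigr => s _ /=.
rewrite rmorph_sum big_distrl; apply: eq_bigr => e _ /=.
by rewrite rmorphM /= conjK; ring.
Qed.

Lemma Iomega_braE w x :
  Iomega psi phi U pi w x = 4 * normsq (braE w (dperpPsi psi phi U x)).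
Proof. by rewrite /Iomega dotv_projE. Qed.

Lemma is_deriveC_state x k : is_deriveC x (state^~ k) (dvec state x k).
Proof.
have dstate : is_deriveC x (state^~ k)
    (\sum_l dC (fun y => U y k l) x * (psi l.1 * phi l.2)).
  rewrite /Psi; apply: is_deriveC_sum => l; apply: is_deriveC_mulr.
  exact: C1fun_is_deriveC.
by rewrite /dvec (is_deriveC_dC dstate).
Qed.

Lemma is_deriveC_psit x w s :
  is_deriveC x (fun y => qw w y s) (braE w (dvec state x) s).
Proof.
have -> : (fun y => qw w y s) = (fun y => \sum_e conjc (pi w e) * state y (s, e)).
  by apply/funext => y; rewrite psitE.
apply: is_deriveC_sum => e; apply: is_deriveC_mull.
exact: is_deriveC_state.
Qed.

Lemma Re_dotv_state_dstate x : Re (dotv (state x) (dvec state x)) = 0.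
Proof.
have := is_derive_normsq (is_deriveC_state x).
rewrite (_ : (fun y => normsq (state y)) = cst 1); last first.
  by apply/funext => y; rewrite normsq_state.
move=> /(@derive_val _ _ _ _ _ _ _); rewrite derive_cst => /esym/eqP.
by rewrite mulf_eq0 pnatr_eq0 => /eqP.
Qed.

Lemma braE_dperp x w : braE w (dperpPsi psi phi U x) =
  (fun s => braE w (dvec state x) s - dotv (state x) (dvec state x) * qw w x s).
Proof.
apply/funext => s; rewrite psitE /braE /dperpPsi big_distrr -sumrB.
by apply: eq_bigr => e _ /=; ring.
Qed.

Lemma QFI_state x : QFI state x = \sum_w Iomega psi phi U pi w x.
Proof.
under eq_bigr do rewrite Iomega_braE.
rewrite -mulr_sumr sum_normsq_braE /QFI; congr (4 * _).
have -> : dperpPsi psi phi U x = (fun k =>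
    1 * dvec state x k + (- dotv (state x) (dvec state x)) * state x k).
  by apply/funext => k; rewrite /dperpPsi mul1r mulNr mulrC.
apply: (@complexI R); rewrite -dotvv dotv_lincomb.
rewrite -[dotv (dvec state x) (state x)]dotvC !dotvv normsq_state.
case: (dotv (state x) (dvec state x)) => cr ci.
by apply/eqP; rewrite eq_complex /abs2 /=; apply/andP; split; apply/eqP; ring.
Qed.

Lemma prob_QFI_le_Iomega x w : 0 < pr w x ->
  pr w x * QFI (sigvec psi phi U pi w) x + (derive1 (pr w) x) ^+ 2 / pr w x
  <= Iomega psi phi U pi w x.
Proof.
move=> p_gt0.
have -> : pr w x * QFI (sigvec psi phi U pi w) x
      + (derive1 (pr w) x) ^+ 2 / pr w x
    = 4 * (normsq (braE w (dvec state x))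
           - Im (dotv (qw w x) (braE w (dvec state x))) ^+ 2 / pr w x)
  := QFI_normalize (is_deriveC_psit x w) p_gt0.
rewrite Iomega_braE braE_dperp ler_pM2l //.
exact: (normsq_sub_imag_ge _ (Re_dotv_state_dstate x) p_gt0).
Qed.

Lemma sum_prob_QFI_le x (A : {set Om}) : (forall w, w \in A -> 0 < pr w x) ->
  \sum_(w in A) pr w x * QFI (sigvec psi phi U pi w) x <= QFI state x.
Proof.
move=> A_pos; rewrite QFI_state.
apply: (@le_trans _ _ (\sum_(w in A) Iomega psi phi U pi w x)).
  apply: ler_sum => w wA; apply: le_trans (prob_QFI_le_Iomega (A_pos w wA)).
  by rewrite lerDl divr_ge0 ?sqr_ge0 // ltW // A_pos.
rewrite [leRHS](bigID (mem A)) /= lerDl; apply: sumr_ge0 => w _.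
by rewrite Iomega_braE mulr_ge0 ?normsq_ge0.
Qed.

End Measurement.

Theorem mainTheorem5 (R : realType) (S E Om : finType)
    (psi : S -> R[i]) (phi : E -> R[i])
    (U : R -> (S * E)%type -> (S * E)%type -> R[i])
    (pi : Om -> E -> R[i]) :
  normsq psi = 1 ->
  normsq phi = 1 ->
  C1_family U ->
  unitary_family U ->
  orthonormal_basis pi ->
  forall x : R,
    (forall w : Om, 0 < prob psi phi U pi w x ->
       prob psi phi U pi w x * QFI (sigvec psi phi U pi w) x
       + (derive1 (prob psi phi U pi w) x) ^+ 2 / prob psi phi U pi w x
       <= Iomega psi phi U pi w x) /\
    (forall A : {set Om}, (forall w, w \in A -> 0 < prob psi phi U pi w x) ->
       \sum_(w in A) prob psi phi U pi w x * QFI (sigvec psi phi U pi w) x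
       <= QFI (Psi psi phi U) x).
Proof.
move=> psi1 phi1 U_C1 U_unitary pi_onb x; split.
- by move=> w; exact: prob_QFI_le_Iomega.
- by move=> A; exact: sum_prob_QFI_le.
Qed.
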